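(* The topological graph $\mathbb G$ is hereditarily unicoherent: for every two closed connected subsets $P,Q\subseteq V(\mathbb G)$, the intersection $P\cap Q$ is connected.
   Context: A graph is a pair $A=(V(A),E(A))$ with $E(A)\subseteq V(A)^2$ reflexive and symmetric; a topological graph additionally has $V$ compact, second countable, zero-dimensional and $E$ closed. Epimorphisms are (continuous) edge-preserving maps surjective on vertices and edges. A vertex set $S$ is disconnected if there are nonempty closed subsets $P,Q$ of $S$ with $P\cup Q=S$ and no edge $\langle a,b\rangle$ with $a\in P$, $b\in Q$; otherwise connected (the empty set counts as connected); components are maximal connected subsets. An epimorphism $f\colon A\to B$ is confluent if for every connected $Q\subseteq V(B)$ each component $C$ of $f^{-1}(Q)$ has $f(C)=Q$. $\mathbb G$ is the projective Fraïssé limit of the class of finite connected graphs with confluent epimorphisms: the unique topological graph such that (1) every finite connected graph is a confluent epimorphic image of $\mathbb G$; (2) for finite connected $A,B$ and confluent epimorphisms $f\colon\mathbb G\to A$, $g\colon B\to A$ there is a confluent epimorphism $h\colon\mathbb G\to B$ with $f=g\circ h$; (3) for each $\varepsilon>0$ some confluent epimorphism from $\mathbb G$ onto a finite connected graph has all point-preimages of diameter $<\varepsilon$. *)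

From HB Require Import structures.
From mathcomp Require Import all_boot all_order all_algebra.
From mathcomp Require Import all_classical all_reals all_analysis.
Set Implicit Arguments. Unset Strict Implicit. Unset Printing Implicit Defensive.
Import Order.TTheory GRing.Theory Num.Theory.
Local Open Scope classical_set_scope.
Local Open Scope ring_scope.

(* [cl] is the class of closed subsets of the ambient vertex space:
   [closed] for a topological graph, every set ([fun _ => True]) for a finite
   (discrete) graph. *)

Definition rel_closed {T : Type} (cl : set T -> Prop) (S P : set T) : Prop :=
  exists X, cl X /\ P = S `&` X.

Definition gdisconnected {T : Type} (cl : set T -> Prop) (E : set (T * T))
  (S : set T) : Prop :=
  exists P Q : set T,
    [/\ rel_closed cl S P, rel_closed cl S Q, P !=set0, Q !=set0
      & P `|` Q = S /\ (forall a b, P a -> Q b -> ~ E (a, b))].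

(* connected (the empty set is connected) *)
Definition gconnected {T : Type} (cl : set T -> Prop) (E : set (T * T))
  (S : set T) : Prop := ~ gdisconnected cl E S.

Definition gcomponent {T : Type} (cl : set T -> Prop) (E : set (T * T))
  (S C : set T) : Prop :=
  [/\ C `<=` S, gconnected cl E C &
      forall D, C `<=` D -> D `<=` S -> gconnected cl E D -> D = C].

Definition epimorphism {T U : Type} (E : set (T * T)) (F : set (U * U))
  (f : T -> U) : Prop :=
  [/\ (forall x y, E (x, y) -> F (f x, f y)),
      (forall u, exists x, f x = u) &
      (forall u v, F (u, v) -> exists x y, [/\ E (x, y), f x = u & f y = v])].

Definition confluent {T U : Type} (clT : set T -> Prop) (E : set (T * T))
  (clU : set U -> Prop) (F : set (U * U)) (f : T -> U) : Prop :=
  forall Q : set U, gconnected clU F Q ->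
  forall C : set T, gcomponent clT E (f @^-1` Q) C -> f @` C = Q.

Definition fedges {A : finType} (eA : rel A) : set (A * A) :=
  [set p | eA p.1 p.2].

Definition discr {A : Type} : set A -> Prop := fun _ => True.

Definition fin_conn_graph (A : finType) (eA : rel A) : Prop :=
  [/\ (0 < #|A|)%N, reflexive eA, symmetric eA &
      gconnected discr (fedges eA) setT].

Definition fconf_epi (B A : finType) (eB : rel B) (eA : rel A) (g : B -> A) : Prop :=
  epimorphism (fedges eB) (fedges eA) g /\
  confluent discr (fedges eB) discr (fedges eA) g.

Definition clopen_basis (T : topologicalType) : Prop :=
  exists B : set (set T), basis B /\ B `<=` clopen.

Definition top_graph (T : topologicalType) (E : set (T * T)) : Prop :=
  [/\ compact [set: T], hausdorff_space T, second_countable (T := T),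
      clopen_basis T &
      [/\ closed E, (forall x, E (x, x)) & (forall x y, E (x, y) -> E (y, x))]].

(* continuous confluent epimorphism from a topological graph onto a finite graph
   (continuity into the discrete topology of A) *)
Definition tconf_epi (T : topologicalType) (E : set (T * T))
  (A : finType) (eA : rel A) (f : T -> A) : Prop :=
  [/\ forall U : set A, open (f @^-1` U),
      epimorphism E (fedges eA) f &
      confluent closed E discr (fedges eA) f].

(* V carries a (pseudo)metric compatible with its topology; "diam X < eps" is
   expressed as: all pairs of points of X lie within some distance e' < eps. *)
Definition is_Fraisse_G (R : realType) (V : pseudoMetricType R)
  (E : set (V * V)) : Prop :=
  [/\ top_graph E,
      (forall (A : finType) (eA : rel A), fin_conn_graph eA ->
         exists f : V -> A, tconf_epi E eA f),
      (forall (A B : finType) (eA : rel A) (eB : rel B) (f : V -> A) (g : B -> A),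
         fin_conn_graph eA -> fin_conn_graph eB ->
         tconf_epi E eA f -> fconf_epi eB eA g ->
         exists h : V -> B, tconf_epi E eB h /\ f = g \o h) &
      (forall eps : R, 0 < eps ->
         exists (A : finType) (eA : rel A) (f : V -> A),
           [/\ fin_conn_graph eA, tconf_epi E eA f &
               forall a : A, exists2 e' : R, e' < eps &
                 forall x y, f x = a -> f y = a -> ball x e' y])].

From HB Require Import structures.
From mathcomp Require Import all_boot all_order all_algebra.
From mathcomp Require Import all_classical all_reals all_analysis.
Import Order.TTheory Num.Theory.
Set Implicit Arguments. Unset Strict Implicit. Unset Printing Implicit Defensive.
Local Open Scope classical_set_scope.
Local Open Scope ring_scope.

(* Suppose P `&` Q splits into far-apart closed pieces A1 and B1.  Take a
   finite quotient f : G -> A whose fibres are so small that each fibre meeting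
   both P and Q lies near A1 or near B1, and label a vertex of A by 1 when its
   fibre lies near B1.  Twist each edge of A inside f(Q) but not inside f(P)
   by the change of label along it.  If the twist is a coboundary, or else if
   f lifts (by property (2)) through the connected double cover of A defined
   by the twist, the twist becomes the coboundary of a locally constant tau
   on G.  Then tau is constant on P and tau + label o f is constant on Q, so
   the label is constant on P `&` Q, although it is 0 on A1 and 1 on B1. *)

Definition edge_invariant {T : Type} (E : set (T * T)) (S : set T) (s : T -> bool)
  : Prop :=
  forall x y, S x -> S y -> E (x, y) -> s x = s y.

Lemma gconnected_const {T : Type} (cl : set T -> Prop) (E : set (T * T))
    (S : set T) (s : T -> bool) :
  gconnected cl E S -> (forall b, cl [set z | s z = b]) -> edge_invariant E S s ->
  forall x y, S x -> S y -> s x = s y.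
Proof.
move=> cS cl_s inv_s x y Sx Sy; apply: contrapT => sxy; apply: cS.
exists (S `&` [set z | s z = s x]), (S `&` [set z | s z = ~~ s x]); split.
- by exists [set z | s z = s x].
- by exists [set z | s z = ~~ s x].
- by exists x.
- by exists y; split=> //=; move: sxy; case: (s x); case: (s y).
split.
  apply/seteqP; split=> [z [] [] //|z Sz /=].
  by case: (s z); case: (s x); [left|right|right|left].
move=> u v [Su su] [Sv sv] /(inv_s _ _ Su Sv).
by rewrite su sv; case: (s x).
Qed.

Lemma gconnected_discr_crossing {T : Type} (E : set (T * T)) (S I : set T) :
  gconnected discr E S -> I `<=` S -> I !=set0 -> (S `\` I) !=set0 ->
  exists x y, [/\ I x, (S `\` I) y & E (x, y)].
Proof.
move=> cS IS I0 SI0; apply: contrapT => noE; apply: cS.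
exists I, (S `\` I); split=> //.
- by exists I; split=> //; rewrite setIidr.
- by exists (~` I).
split; first exact: setDUK.
by move=> x y Ix SIy Exy; apply: noE; exists x, y.
Qed.

Section DiscreteConnectivity.
Variables (T : Type) (E : set (T * T)).
Hypotheses (Erefl : forall x, E (x, x)) (Esym : forall x y, E (x, y) -> E (y, x)).

Lemma gconnected_discr (S : set T) :
  (forall s, edge_invariant E S s -> forall x y, S x -> S y -> s x = s y) ->
  gconnected discr E S.
Proof.
move=> const_S [X [Y [_ _ [x Xx] [y Yy] [XY noE]]]].
have XorY z : S z -> X z \/ Y z by rewrite -XY.
have SX z : X z -> S z by rewrite -XY; left.
have SY z : Y z -> S z by rewrite -XY; right.
have nXY z : Y z -> ~ X z by move=> Yz Xz; exact: noE Xz Yz (Erefl z).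
suff : `[< X x >] = `[< X y >] by rewrite asboolT // asboolF //; exact: nXY.
apply: (const_S (fun z => `[< X z >]) _ x y (SX x Xx) (SY y Yy)) => u v Su Sv Euv /=.
case: (XorY u Su) => [Xu|Yu]; case: (XorY v Sv) => [Xv|Yv].
- by rewrite !asboolT.
- by exfalso; exact: noE Xu Yv Euv.
- by exfalso; exact: noE Xv Yu (Esym Euv).
- by rewrite !asboolF //; exact: nXY.
Qed.

Lemma gconnected_set1 (x : T) : gconnected discr E [set x].
Proof. by apply: gconnected_discr => s _ u v -> ->. Qed.

Lemma gconnected_setU1 (C : set T) (c v : T) :
  gconnected discr E C -> C c -> E (c, v) -> gconnected discr E (C `|` [set v]).
Proof.
move=> cC Cc Ecv; apply: gconnected_discr => s inv_s.
have sC : forall x, C x -> s x = s c.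
  move=> x Cx; apply: (gconnected_const cC (fun _ => I)) => // u w Cu Cw.
  by apply: inv_s; left.
have sv : s v = s c by apply: esym; apply: inv_s => //; [left|right].
have sCv x : (C `|` [set v]) x -> s x = s c by case=> [/sC|->].
by move=> x y /sCv-> /sCv->.
Qed.

Lemma gcomponent_discr_neq0 (S C : set T) :
  gcomponent discr E S C -> S !=set0 -> C !=set0.
Proof.
move=> [_ _ maxC] [u Su]; apply: contrapT => nC.
have C0 : C = set0 by apply/seteqP; split=> // z Cz; apply: nC; exists z.
have u0 : [set u] = C.
  by apply: maxC => [|_ ->|]; [rewrite C0 | | exact: gconnected_set1].
by apply: nC; exists u; rewrite -u0.
Qed.

Lemma confluent_of_lifting {U : Type} (F : set (U * U)) (f : T -> U) :
  (forall y, exists u, f u = y) ->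
  (forall u y, F (f u, y) -> exists2 v, f v = y & E (u, v)) ->
  confluent discr E discr F f.
Proof.
move=> f_surj lift Q0 cQ0 C compC; have [CQ0 cC maxC] := compC.
apply/seteqP; split=> [_ [u Cu <-]|y Q0y]; first exact: CQ0.
apply: contrapT => nCy.
have [c Cc] : C !=set0.
  have [u fu] := f_surj y.
  by apply: (gcomponent_discr_neq0 compC); exists u; rewrite /preimage /= fu.
have fCQ0 : f @` C `<=` Q0 by move=> _ [u Cu <-]; exact: CQ0.
have fC0 : f @` C !=set0 by exists (f c), c.
have Q0fC0 : (Q0 `\` f @` C) !=set0 by exists y.
have [_ [z [[u Cu <-] [Q0z nCz] Fuz]]] := gconnected_discr_crossing cQ0 fCQ0 fC0 Q0fC0.
have [v fv Euv] := lift u z Fuz.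
have CvC : C `|` [set v] = C.
  apply: maxC; first exact: subsetUl.
    by move=> x [/CQ0|->] //; rewrite /preimage /= fv.
  exact: gconnected_setU1 cC Cu Euv.
by apply: nCz; exists v => //; rewrite -CvC; right.
Qed.

End DiscreteConnectivity.

Definition coboundary {A : Type} (eA : rel A) (t : A -> A -> bool) : Prop :=
  exists s : A -> bool, forall x y, eA x y -> t x y = s x (+) s y.

Section DoubleCover.
Variables (A : finType) (eA : rel A) (t : A -> A -> bool).
Hypotheses (eA_refl : reflexive eA) (eA_sym : symmetric eA).
Hypotheses (t_xx : forall x, t x x = false) (t_sym : forall x y, t x y = t y x).

Definition double_cover : rel (A * bool) :=
  fun u v => eA u.1 v.1 && (v.2 == u.2 (+) t u.1 v.1).

Lemma double_cover_refl : reflexive double_cover.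
Proof. by move=> u; rewrite /double_cover eA_refl t_xx addbF eqxx. Qed.

Lemma double_cover_sym : symmetric double_cover.
Proof.
move=> u v; rewrite /double_cover eA_sym t_sym; congr (_ && _).
by case: u.2; case: v.2; case: (t _ _).
Qed.

Lemma fst_double_cover_conf : fconf_epi double_cover eA fst.
Proof.
have lift u y : eA u.1 y -> double_cover u (y, u.2 (+) t u.1 y).
  by move=> Euy; rewrite /double_cover Euy eqxx.
split; first split.
- by move=> u v /andP[].
- by move=> x; exists (x, false).
- by move=> x y Exy; exists (x, false), (y, t x y); split=> //; exact: lift.
apply: confluent_of_lifting.
- by move=> u; exact: double_cover_refl.
- by move=> u v; rewrite /fedges /= double_cover_sym.
- by move=> x; exists (x, false).
- by move=> u y Euy; exists (y, u.2 (+) t u.1 y) => //; exact: lift.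
Qed.

Lemma double_cover_connected :
  fin_conn_graph eA -> ~ coboundary eA t -> fin_conn_graph double_cover.
Proof.
move=> [A0 _ _ cA] ncob; have [x0 _] := card_gt0P A0.
split; [by apply/card_gt0P; exists (x0, false) | exact: double_cover_refl |
        exact: double_cover_sym |].
apply: gconnected_discr => [u|u v|s inv_s u v _ _].
- exact: double_cover_refl.
- by rewrite /fedges /= double_cover_sym.
pose al x := s (x, false); pose be x := s (x, true).
have lift x y b : eA x y -> s (y, b (+) t x y) = s (x, b).
  move=> Exy; apply: esym; apply: inv_s => //.
  by rewrite /fedges /double_cover /= Exy eqxx.
have const (g : A -> bool) :
    (forall x y, eA x y -> g x = g y) -> forall x, g x = g x0.
  move=> inv_g x; apply: (gconnected_const cA (fun _ => I)) => // y z _ _.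
  exact: inv_g.
have sheets x : al x (+) be x = al x0 (+) be x0.
  apply: (const (fun z => al z (+) be z)) => y z Eyz.
  rewrite /al /be -(lift y z false Eyz) -(lift y z true Eyz).
  by case: (t y z) => //=; rewrite addbC.
(* Either s swaps the two sheets, and then al trivialises t, or s is constant. *)
case: (boolP (al x0 (+) be x0)) => d0 in sheets *.
  have be_al x : be x = ~~ al x by move: (sheets x); case: (al x); case: (be x).
  exfalso; apply: ncob; exists al => x y Exy.
  have := lift x y false Exy; rewrite -/(al x).
  by case: (t x y) => [|<-]; rewrite ?addbb // -/(be y) be_al => <-; case: (al y).
have be_al x : be x = al x by move: (sheets x); case: (al x); case: (be x).
have al_const : forall x, al x = al x0.
  apply: (const al) => x y Exy; have := lift x y false Exy; rewrite -/(al x).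
  by case: (t x y) => /= <- //; rewrite -/(be y) be_al.
have s_al x b : s (x, b) = al x0.
  by case: b; [rewrite -/(be x) be_al|]; exact: al_const.
by case: u v => [x b] [y b']; rewrite !s_al.
Qed.

End DoubleCover.

Lemma closed_preimage {T : topologicalType} {U : Type} (g : T -> U) :
  (forall X, open (g @^-1` X)) -> forall X, closed (g @^-1` X).
Proof.
by move=> g_cont X; rewrite -[X]setCK preimage_setC; exact: open_closedC (g_cont (~` X)).
Qed.

Lemma closed_fiber_addb {T : topologicalType} (s s' : T -> bool) :
  (forall b, closed [set z | s z = b]) -> (forall b, closed [set z | s' z = b]) ->
  forall b, closed [set z | s z (+) s' z = b].
Proof.
move=> cl_s cl_s' b.
have -> : [set z | s z (+) s' z = b] =
    [set z | s z = true] `&` [set z | s' z = ~~ b] `|`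
    [set z | s z = false] `&` [set z | s' z = b].
  by apply/seteqP; split=> z /=; case: (s z); case: (s' z); case: b; firstorder.
by apply: closedU; apply: closedI.
Qed.

Definition meet_twist {A : Type} (P Q : set A) (w : A -> bool) (x y : A) : bool :=
  if (x \in P) && (y \in P) then false
  else if (x \in Q) && (y \in Q) then w x (+) w y else false.

Lemma meet_twist_xx {A : Type} (P Q : set A) w x : meet_twist P Q w x x = false.
Proof. by rewrite /meet_twist addbb; case: ifP => //; case: ifP. Qed.

Lemma meet_twist_sym {A : Type} (P Q : set A) w x y :
  meet_twist P Q w x y = meet_twist P Q w y x.
Proof. by rewrite /meet_twist andbC [(y \in Q) && _]andbC addbC. Qed.

Section MeetLabel.
Variables (V : topologicalType) (E : set (V * V)) (P Q : set V).
Variables (A : finType) (eA : rel A) (f : V -> A) (w : A -> bool).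
Hypotheses (cP : gconnected closed E P) (cQ : gconnected closed E Q).
Hypotheses (f_cont : forall X, open (f @^-1` X))
  (f_edge : forall x y, E (x, y) -> eA (f x) (f y)).
Hypothesis w_edge : forall z z', Q z -> Q z' -> E (z, z') ->
  (f @` P) (f z) -> (f @` P) (f z') -> w (f z) = w (f z').

Let t : A -> A -> bool := meet_twist (f @` P) (f @` Q) w.

Lemma label_const_of_section (tau : V -> bool) :
  (forall b, closed [set z | tau z = b]) ->
  (forall z z', E (z, z') -> tau z' = tau z (+) t (f z) (f z')) ->
  forall a b, (P `&` Q) a -> (P `&` Q) b -> w (f a) = w (f b).
Proof.
move=> cl_tau tau_edge a b [Pa Qa] [Pb Qb].
have inP z : P z -> f z \in f @` P by move=> Pz; apply/mem_set; exists z.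
have inQ z : Q z -> f z \in f @` Q by move=> Qz; apply/mem_set; exists z.
have tauP : tau a = tau b.
  apply: (gconnected_const cP cl_tau) => // z z' Pz Pz' Ezz'.
  by rewrite (tau_edge _ _ Ezz') /t /meet_twist !inP ?addbF.
have cl_wf : forall b, closed [set z | w (f z) = b].
  by move=> c; exact: (closed_preimage f_cont (X := [set x | w x = c])).
have : tau a (+) w (f a) = tau b (+) w (f b).
  apply: (gconnected_const cQ (closed_fiber_addb cl_tau cl_wf)) => //.
  move=> z z' Qz Qz' Ezz'.
  rewrite (tau_edge _ _ Ezz') /t /meet_twist !inQ //=.
  case: ifP => [/andP[/set_mem fPz /set_mem fPz']|_].
    by rewrite addbF (w_edge Qz Qz' Ezz' fPz fPz').
  by case: (tau z); case: (w (f z)); case: (w (f z')).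
by rewrite tauP => /addbI.
Qed.

Lemma label_const_of_coboundary :
  coboundary eA t -> forall a b, (P `&` Q) a -> (P `&` Q) b -> w (f a) = w (f b).
Proof.
move=> [s t_s]; apply: (@label_const_of_section (s \o f)).
  by move=> b; exact: (closed_preimage f_cont (X := [set x | s x = b])).
by move=> z z' Ezz'; rewrite /= t_s ?f_edge // addKb.
Qed.

Hypothesis lift_to_cover : forall (B : finType) (eB : rel B) (g : B -> A),
  fin_conn_graph eB -> fconf_epi eB eA g ->
  exists h : V -> B, tconf_epi E eB h /\ f = g \o h.

Lemma label_const_of_lifting : fin_conn_graph eA ->
  forall a b, (P `&` Q) a -> (P `&` Q) b -> w (f a) = w (f b).
Proof.
move=> cA; have [cob|ncob] := pselect (coboundary eA t).
  exact: label_const_of_coboundary.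
have [_ eA_refl eA_sym _] := cA.
have t_xx := meet_twist_xx (f @` P) (f @` Q) w.
have t_sym := meet_twist_sym (f @` P) (f @` Q) w.
have [h [[h_cont [h_edge _ _] _] fh]] := lift_to_cover
  (double_cover_connected eA_refl eA_sym t_xx t_sym cA ncob)
  (fst_double_cover_conf eA_refl eA_sym t_xx t_sym).
apply: (@label_const_of_section (fun z => (h z).2)).
  by move=> b; exact: (closed_preimage h_cont (X := [set u | u.2 = b])).
have fh_fst z : f z = (h z).1 by rewrite fh.
by move=> z z' /h_edge /andP[_ /eqP->]; rewrite !fh_fst.
Qed.

End MeetLabel.

Section FiberLabel.
Variables (V A : Type) (E : set (V * V)) (P Q NA NB : set V) (f : V -> A).
Hypotheses (Erefl : forall x, E (x, x)) (Esym : forall x y, E (x, y) -> E (y, x)).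
Hypothesis NA_NB_gap : forall u v, NA u -> NB v -> ~ E (u, v).
Hypothesis fiber_dichotomy : forall p q, P p -> Q q -> f p = f q ->
  (forall u, f u = f p -> NA u) \/ (forall u, f u = f p -> NB u).

Let w (x : A) : bool := x \in f @` NB.

Lemma fiber_label_spec z : Q z -> (f @` P) (f z) -> if w (f z) then NB z else NA z.
Proof.
move=> Qz [p Pp fpz]; case: (fiber_dichotomy Pp Qz fpz) => [inNA|inNB].
  case: ifP => [/set_mem[u NBu fu]|_]; last exact: inNA z (esym fpz).
  by case: (NA_NB_gap (inNA u _) NBu (Erefl u)); rewrite fu.
have NBz : NB z by apply: inNB; rewrite fpz.
suff -> : w (f z) by [].
by apply: mem_set; exists z.
Qed.

Lemma fiber_label_edge z z' : Q z -> Q z' -> E (z, z') ->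
  (f @` P) (f z) -> (f @` P) (f z') -> w (f z) = w (f z').
Proof.
move=> Qz Qz' Ezz' /(fiber_label_spec Qz) + /(fiber_label_spec Qz').
case: (w (f z)); case: (w (f z')) => // Nz Nz'; exfalso.
- exact: NA_NB_gap Nz' Nz (Esym Ezz').
- exact: NA_NB_gap Nz Nz' Ezz'.
Qed.

Lemma fiber_label_NA a : NA a -> P a -> Q a -> w (f a) = false.
Proof.
move=> NAa Pa Qa; have := fiber_label_spec Qa (ex_intro2 _ _ a Pa erefl).
by case: (w (f a)) => // NBa; case: (NA_NB_gap NAa NBa (Erefl a)).
Qed.

End FiberLabel.

Lemma compact_uniform_radius {R : realType} {T : topologicalType} (K : set T)
    (S : R -> T -> Prop) :
  compact K -> (forall e e' x, 0 < e -> e <= e' -> S e' x -> S e x) ->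
  (forall x, K x -> exists2 e, 0 < e & \forall y \near x, S e y) ->
  exists2 e, 0 < e & forall x, K x -> S e x.
Proof.
move=> /compact_near_coveringP cK S_anti S_loc.
have : \forall e \near 0^'+, K `<=` S e.
  apply: cK => x Kx; have [e e0 Se] := S_loc x Kx.
  near=> y e'; apply: (S_anti e' e) => //.
  - by near: e'; exact: nbhs_right_le.
  - by rewrite /=; near: y.
move=> /(filterI (nbhs_right_gt 0)) /filter_ex [e [e0 KSe]].
by exists e.
Unshelve. all: end_near. Qed.

Section MetricGaps.
Variables (R : realType) (M : pseudoMetricType R).

Lemma compact_closed_gap (K C : set M) :
  compact K -> closed C -> (forall x, K x -> ~ C x) ->
  exists2 r, 0 < r & forall x, K x -> ball x r `<=` ~` C.
Proof.
move=> cK clC KC.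
apply: (compact_uniform_radius (S := fun r x => ball x r `<=` ~` C) cK).
  by move=> e e' x _ ee'; apply: subset_trans; exact: le_ball.
move=> x Kx.
have /nbhs_ballP [e e0 He] : nbhs x (~` C).
  by apply: open_nbhs_nbhs; split; [exact: closed_openC | exact: KC Kx].
have e2_gt0 : 0 < e / 2 by rewrite divr_gt0.
exists (e / 2) => //; near=> x' => y x'y; apply: He; apply: (ball_split (z := x')) x'y.
by near: x'; exact: nbhsx_ballx.
Unshelve. all: end_near. Qed.

Lemma compact_near_or_far (K Q : set M) (r : R) :
  compact K -> closed Q -> 0 < r ->
  exists2 d, 0 < d & forall p, K p ->
    (exists2 c, (K `&` Q) c & ball c r p) \/ (forall q, Q q -> ~ ball p d q).
Proof.
move=> cK clQ r0; pose N := \bigcup_(c in K `&` Q) (ball c r)°.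
have cKN : compact (K `\` N).
  by rewrite setDE; apply: compact_closedI cK _; apply: open_closedC;
    apply: bigcup_open => c _; exact: open_interior.
have KNQ x : (K `\` N) x -> ~ Q x.
  by move=> [Kx NKx] Qx; apply: NKx; exists x => //; exact: nbhsx_ballx.
have [d d0 gap] := compact_closed_gap cKN clQ KNQ.
exists d => // p Kp; have [[c KQc /interior_subset bcp]|Np] := pselect (N p).
  by left; exists c.
by right=> q Qq /(gap p (conj Kp Np)).
Qed.

Definition fibers_within {A : Type} (f : M -> A) (eps : R) : Prop :=
  forall a, exists2 e, e < eps & forall x y, f x = a -> f y = a -> ball x e y.

Lemma small_fibers_dichotomy (P Q A1 B1 : set M) (r : R) :
  compact P -> closed Q -> P `&` Q `<=` A1 `|` B1 -> 0 < r ->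
  exists2 eps, 0 < eps & forall (A : Type) (f : M -> A), fibers_within f eps ->
    forall p q, P p -> Q q -> f p = f q ->
    (forall u, f u = f p -> (\bigcup_(x in A1) ball x r) u) \/
    (forall u, f u = f p -> (\bigcup_(x in B1) ball x r) u).
Proof.
move=> cP clQ PQ_AB r0.
have [d d0 near_far] := compact_near_or_far cP clQ (divr_gt0 r0 (ltr0n _ 2)).
exists (Num.min d (r / 2)); first by rewrite lt_min d0 divr_gt0.
move=> A f small p q Pp Qq fpq; have [e] := small (f p).
rewrite lt_min => /andP[e_d e_r] fiber_ball.
have [[c PQc bcp]|far] := near_far p Pp; last first.
  by exfalso; apply: (far q Qq); apply: (le_ball (ltW e_d)); exact: fiber_ball.
have bc u : f u = f p -> ball c r u.
  move=> fu; apply: (ball_split (z := p)) bcp _.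
  by apply: (le_ball (ltW e_r)); exact: fiber_ball.
by case: (PQ_AB c PQc) => [A1c|B1c]; [left|right] => u /bc; exists c.
Qed.

End MetricGaps.

Lemma compact_edge_gap {R : realType} {M : pseudoMetricType R}
    (K1 K2 : set M) (E : set (M * M)) :
  compact K1 -> compact K2 -> closed E -> (forall x y, K1 x -> K2 y -> ~ E (x, y)) ->
  exists2 r, 0 < r & forall u v, (\bigcup_(x in K1) ball x r) u ->
    (\bigcup_(y in K2) ball y r) v -> ~ E (u, v).
Proof.
move=> cK1 cK2 clE noE.
have K12_E p : (K1 `*` K2) p -> ~ E p by case: p => x y [/= K1x K2y]; exact: noE.
have [r r0 gap] := compact_closed_gap (compact_setX cK1 cK2) clE K12_E.
exists r => // u v [x K1x xu] [y K2y yv].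
exact: (gap (x, y) (conj K1x K2y) (u, v)).
Qed.

Lemma rel_closed_closed {T : topologicalType} (S X : set T) :
  closed S -> rel_closed closed S X -> closed X.
Proof. by move=> clS [Y [clY ->]]; exact: closedI. Qed.

Theorem mainTheorem14 (R : realType) (V : pseudoMetricType R) (E : set (V * V)) :
  is_Fraisse_G E ->
  forall P Q : set V, closed P -> closed Q ->
    gconnected closed E P -> gconnected closed E Q ->
    gconnected closed E (P `&` Q).
Proof.
move=> [[cptV _ _ _ [clE Erefl Esym]] _ lift small_maps] P Q clP clQ cP cQ.
move=> [A1 [B1 [clA1 clB1 [a A1a] [b B1b] [AB_PQ noE]]]].
have clPQ : closed (P `&` Q) by exact: closedI.
have cA1 := subclosed_compact (rel_closed_closed clPQ clA1) cptV (subsetT _).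
have cB1 := subclosed_compact (rel_closed_closed clPQ clB1) cptV (subsetT _).
have [r r0 NA_NB_gap] := compact_edge_gap cA1 cB1 clE noE.
pose NA := \bigcup_(x in A1) ball x r; pose NB := \bigcup_(y in B1) ball y r.
have PQ_AB : P `&` Q `<=` A1 `|` B1 by rewrite AB_PQ.
have [eps eps0 dichotomy] := small_fibers_dichotomy
  (subclosed_compact clP cptV (subsetT _)) clQ PQ_AB r0.
have [A [eA [f [cA f_epi f_small]]]] := small_maps eps eps0.
have [f_cont [f_edge _ _] _] := f_epi.
have [[Pa Qa] [Pb Qb]] : (P `&` Q) a /\ (P `&` Q) b.
  by rewrite -AB_PQ; split; [left|right].
have NAa : NA a by exists a => //; apply: ballxx.
have wb : f b \in f @` NB by apply/mem_set; exists b => //; exists b => //; apply: ballxx.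
have := label_const_of_lifting cP cQ f_cont f_edge
  (fiber_label_edge Erefl Esym NA_NB_gap (dichotomy A f f_small))
  (fun B eB g cB g_conf => lift A B eA eB f g cA cB f_epi g_conf)
  cA (conj Pa Qa) (conj Pb Qb).
by rewrite (fiber_label_NA Erefl NA_NB_gap (dichotomy A f f_small) NAa Pa Qa) wb.
Qed.
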